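(* Let $S$ be a semigroup and let $a,b\in S$ satisfy $a=aba$ and $b=bab$. Then \[(aSa,\star_b)\cong(bSb,\star_a)\cong(aSb,\cdot)\cong(bSa,\cdot),\] and all four are monoids.
   Context: For elements $u,v$ of a semigroup $S$, $uSv=\{uxv: x\in S\}$. For $c\in S$, $\star_c$ denotes the sandwich operation $x\star_c y=xcy$ on $S$. $(T,\star_c)$ denotes the subset $T\subseteq S$ equipped with the operation $\star_c$ (here $T$ is closed under it), and $(T,\cdot)$ denotes $T$ with the original operation of $S$. *)

Set Implicit Arguments.

Definition associative_op (S : Type) (op : S -> S -> S) : Prop :=
  forall x y z, op x (op y z) = op (op x y) z.

Definition sandwich_set (S : Type) (mul : S -> S -> S) (u v : S) : S -> Prop :=
  fun y => exists x, y = mul (mul u x) v.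

Definition sandwich_op (S : Type) (mul : S -> S -> S) (c : S) : S -> S -> S :=
  fun x y => mul (mul x c) y.

Definition closed_under (S : Type) (T : S -> Prop) (op : S -> S -> S) : Prop :=
  forall x y, T x -> T y -> T (op x y).

Definition is_monoid_on (S : Type) (T : S -> Prop) (op : S -> S -> S) : Prop :=
  closed_under T op /\
  (forall x y z, T x -> T y -> T z -> op x (op y z) = op (op x y) z) /\
  exists e, T e /\ forall x, T x -> op e x = x /\ op x e = x.

Definition magma_iso_on (S : Type) (A : S -> Prop) (opA : S -> S -> S)
    (B : S -> Prop) (opB : S -> S -> S) : Prop :=
  exists f : S -> S,
    (forall x, A x -> B (f x)) /\
    (forall x y, A x -> A y -> f x = f y -> x = y) /\
    (forall y, B y -> exists x, A x /\ f x = y) /\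
    (forall x y, A x -> A y -> f (opA x y) = opB (f x) (f y)).


(* The maps x |-> bxb, y |-> ay and z |-> bza are the isomorphisms, with
   inverses y |-> aya, z |-> bz and w |-> awb: every composite collapses by
   aba = a and bab = b.  (aSa, *_b) is a monoid with identity a, since
   ab(asa) = asa, and being a monoid transfers along isomorphisms. *)

Section Transport.

Context {S : Type}.

Lemma magma_iso_of_inverse (A B : S -> Prop) (opA opB : S -> S -> S)
    (f g : S -> S) :
  (forall x, A x -> B (f x)) -> (forall y, B y -> A (g y)) ->
  (forall x, A x -> g (f x) = x) -> (forall y, B y -> f (g y) = y) ->
  (forall x y, A x -> A y -> f (opA x y) = opB (f x) (f y)) ->
  magma_iso_on A opA B opB.
Proof.
  intros fAB gBA gfK fgK fM.
  exists f; repeat split; auto.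
  - intros x y Ax Ay Hxy.
    rewrite <- (gfK x Ax), <- (gfK y Ay), Hxy; reflexivity.
  - intros y By; exists (g y); auto.
Qed.

Lemma is_monoid_on_iso {A B : S -> Prop} {opA opB : S -> S -> S} :
  magma_iso_on A opA B opB -> is_monoid_on A opA -> is_monoid_on B opB.
Proof.
  intros (f & fAB & _ & fsurj & fM) (closedA & assocA & e & Ae & unitA).
  split; [| split].
  - intros y1 y2 By1 By2.
    destruct (fsurj y1 By1) as (x1 & Ax1 & <-).
    destruct (fsurj y2 By2) as (x2 & Ax2 & <-).
    rewrite <- fM by assumption; auto.
  - intros y1 y2 y3 By1 By2 By3.
    destruct (fsurj y1 By1) as (x1 & Ax1 & <-).
    destruct (fsurj y2 By2) as (x2 & Ax2 & <-).
    destruct (fsurj y3 By3) as (x3 & Ax3 & <-).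
    rewrite <- !fM by auto; rewrite assocA by assumption; reflexivity.
  - exists (f e); split; auto.
    intros y By; destruct (fsurj y By) as (x & Ax & <-).
    destruct (unitA x Ax) as [ex xe].
    rewrite <- !fM by assumption; rewrite ex, xe; split; reflexivity.
Qed.

End Transport.

Section RegularPair.

Context {S : Type} {mul : S -> S -> S}.
Hypothesis assoc : associative_op mul.

Local Infix "*" := mul.

Lemma sandwich_op_assoc (c : S) : associative_op (sandwich_op mul c).
Proof. intros x y z; unfold sandwich_op; rewrite !assoc; reflexivity. Qed.

Lemma sandwich_set_closed (u v c : S) :
  closed_under (sandwich_set mul u v) (sandwich_op mul c).
Proof.
  intros x y [s ->] [t ->]; exists (s * v * c * u * t); unfold sandwich_op.
  rewrite !assoc; reflexivity.
Qed.

Context {a b : S}.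
Hypothesis haba : a = a * b * a.

Lemma is_monoid_on_sandwich_set :
  is_monoid_on (sandwich_set mul a a) (sandwich_op mul b).
Proof.
  split; [apply sandwich_set_closed | split].
  - intros x y z _ _ _; apply sandwich_op_assoc.
  - exists a; split; [exists b; exact haba |].
    intros x [s ->]; unfold sandwich_op.
    rewrite !assoc, <- haba; split; [reflexivity |].
    rewrite <- !assoc, (assoc a b a), <- haba; reflexivity.
Qed.

Hypothesis hbab : b = b * a * b.

Let aba : a * (b * a) = a.
Proof. rewrite assoc; symmetry; exact haba. Qed.

Let bab : b * (a * b) = b.
Proof. rewrite assoc; symmetry; exact hbab. Qed.

Let aba_l (t : S) : a * (b * (a * t)) = a * t.
Proof. rewrite (assoc b), assoc, aba; reflexivity. Qed.

Let bab_l (t : S) : b * (a * (b * t)) = b * t.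
Proof. rewrite (assoc a), assoc, bab; reflexivity. Qed.

Ltac reduce_words :=
  unfold sandwich_op; repeat rewrite <- assoc;
  repeat first [rewrite aba_l | rewrite bab_l | rewrite aba | rewrite bab].

Lemma magma_iso_aSa_bSb :
  magma_iso_on (sandwich_set mul a a) (sandwich_op mul b)
               (sandwich_set mul b b) (sandwich_op mul a).
Proof.
  apply magma_iso_of_inverse with (f := fun x => b * x * b) (g := fun y => a * y * a).
  - intros x _; exists x; reflexivity.
  - intros y _; exists y; reflexivity.
  - intros x [s ->]; reduce_words; reflexivity.
  - intros y [s ->]; reduce_words; reflexivity.
  - intros x y _ _; reduce_words; reflexivity.
Qed.

Lemma magma_iso_bSb_aSb :
  magma_iso_on (sandwich_set mul b b) (sandwich_op mul a)
               (sandwich_set mul a b) mul.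
Proof.
  apply magma_iso_of_inverse with (f := fun y => a * y) (g := fun z => b * z).
  - intros y [s ->]; exists (b * s); rewrite !assoc; reflexivity.
  - intros z [s ->]; exists (a * s); rewrite !assoc; reflexivity.
  - intros y [s ->]; reduce_words; reflexivity.
  - intros z [s ->]; reduce_words; reflexivity.
  - intros y y' _ _; reduce_words; reflexivity.
Qed.

Lemma magma_iso_aSb_bSa :
  magma_iso_on (sandwich_set mul a b) mul (sandwich_set mul b a) mul.
Proof.
  apply magma_iso_of_inverse with (f := fun z => b * z * a) (g := fun w => a * w * b).
  - intros z _; exists z; reflexivity.
  - intros w _; exists w; reflexivity.
  - intros z [s ->]; reduce_words; reflexivity.
  - intros w [s ->]; reduce_words; reflexivity.
  - intros z z' _ [t ->]; reduce_words; reflexivity.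
Qed.

End RegularPair.

Theorem lemma2p3 (S : Type) (mul : S -> S -> S) (assoc : associative_op mul)
  (a b : S) (haba : a = mul (mul a b) a) (hbab : b = mul (mul b a) b) :
  magma_iso_on (sandwich_set mul a a) (sandwich_op mul b)
               (sandwich_set mul b b) (sandwich_op mul a) /\
  magma_iso_on (sandwich_set mul b b) (sandwich_op mul a)
               (sandwich_set mul a b) mul /\
  magma_iso_on (sandwich_set mul a b) mul
               (sandwich_set mul b a) mul /\
  is_monoid_on (sandwich_set mul a a) (sandwich_op mul b) /\
  is_monoid_on (sandwich_set mul b b) (sandwich_op mul a) /\
  is_monoid_on (sandwich_set mul a b) mul /\
  is_monoid_on (sandwich_set mul b a) mul.
Proof.
  pose proof (magma_iso_aSa_bSb assoc haba hbab) as iso_aa_bb.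
  pose proof (magma_iso_bSb_aSb assoc haba hbab) as iso_bb_ab.
  pose proof (magma_iso_aSb_bSa assoc haba hbab) as iso_ab_ba.
  pose proof (is_monoid_on_sandwich_set assoc haba) as monoid_aa.
  pose proof (is_monoid_on_iso iso_aa_bb monoid_aa) as monoid_bb.
  pose proof (is_monoid_on_iso iso_bb_ab monoid_bb) as monoid_ab.
  pose proof (is_monoid_on_iso iso_ab_ba monoid_ab) as monoid_ba.
  exact (conj iso_aa_bb (conj iso_bb_ab (conj iso_ab_ba
    (conj monoid_aa (conj monoid_bb (conj monoid_ab monoid_ba)))))).
Qed.
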